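(* For $d=4$ the set $A(\sigma_\bullet,(2,0))$ is connected, and for $d=5$ the set $A(\sigma_\bullet,(2,1))$ is connected.
   Context: Identify a monic real polynomial $Q_d=x^d+\sum_{j=0}^{d-1}a_jx^j$ with its coefficient vector $(a_{d-1},\ldots,a_0)\in\mathbb{R}^d$. $\sigma_\bullet=(+,-,+,+,\ldots,+,+,-,+)$ denotes the sign pattern of length $d+1$ in which the coefficients of $x^{d-1}$ and $x^1$ are negative and all other coefficients are positive; for $d=4$ it is $(+,-,+,-,+)$ and for $d=5$ it is $(+,-,+,+,-,+)$. $A(\sigma_\bullet,(2,d-4))$ is the set of monic degree-$d$ polynomials with all coefficients non-zero with signs given by $\sigma_\bullet$ (i.e. $\operatorname{sign}(a_j)$ equals the entry of $\sigma_\bullet$ corresponding to $x^j$), having exactly two positive and exactly $d-4$ negative roots, all real roots simple, and exactly one pair of complex conjugate non-real roots. *)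

From HB Require Import structures.
From mathcomp Require Import all_boot all_order all_algebra.
From mathcomp Require Import all_classical all_reals all_analysis.
From mathcomp Require Import matrix_topology matrix_normedtype.
From mathcomp Require Import complex.
Import numFieldTopology.Exports.
Set Implicit Arguments.
Unset Strict Implicit.
Unset Printing Implicit Defensive.
Import Order.TTheory GRing.Theory Num.Theory.
Local Open Scope ring_scope.
Local Open Scope classical_set_scope.

(* A coefficient vector a : 'rV[R]_d is read as (a_{d-1}, ..., a_0):
   entry number i (0-based) of the row is a_{d-1-i}. *)
Definition coefj (R : realType) (d : nat) (a : 'rV[R]_d) (j : 'I_d) : R :=
  a ord0 (rev_ord j).

Definition Qpoly (R : realType) (d : nat) (a : 'rV[R]_d) : {poly R} :=
  'X^d + \sum_(j < d) (coefj a j)%:P * 'X^j.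

(* sign pattern sigma_bullet: the coefficients of x^{d-1} and x^1 are negative,
   all others positive (leading coefficient 1 is positive automatically). *)
Definition sigma_neg (d : nat) (j : nat) : bool := (j == d.-1) || (j == 1%N).

Definition has_sign_sigma_bullet (R : realType) (d : nat) (a : 'rV[R]_d) : Prop :=
  forall j : 'I_d, if sigma_neg d j then coefj a j < 0 else 0 < coefj a j.

Definition nroots_in (R : realType) (p : {poly R}) (P : R -> bool) (n : nat) : Prop :=
  exists s : seq R, [/\ uniq s, size s = n & forall x, (x \in s) = (P x && root p x)].

Definition cconj (R : realType) (z : R[i]) : R[i] := @Complex R (@complex.Re R z) (- @complex.Im R z).

Definition to_C (R : realType) (x : R) : R[i] := @Complex R x 0.

Definition one_nonreal_pair (R : realType) (p : {poly R}) : Prop :=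
  let pc := map_poly (@to_C R) p in
  exists z : R[i], [/\ @complex.Im R z != 0, root pc z, ~~ root pc^`() z &
    forall w : R[i], @complex.Im R w != 0 -> root pc w -> w = z \/ w = cconj z].

Definition A_sigma (R : realType) (d pos neg : nat) : set 'rV[R]_d :=
  [set a | [/\ has_sign_sigma_bullet a,
              nroots_in (Qpoly a) (fun x => 0 < x) pos,
              nroots_in (Qpoly a) (fun x => x < 0) neg,
              (forall x : R, root (Qpoly a) x -> ~~ root (Qpoly a)^`() x) &
              one_nonreal_pair (Qpoly a)]].

From HB Require Import structures.
From mathcomp Require Import all_boot all_order all_algebra.
From mathcomp Require Import all_classical all_reals all_analysis.
From mathcomp Require Import matrix_topology matrix_normedtype.
From mathcomp Require Import complex.
From mathcomp Require Import ring lra.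
Import numFieldTopology.Exports.
Import Order.TTheory GRing.Theory Num.Theory.
Local Open Scope ring_scope.
Local Open Scope classical_set_scope.

(* A point of A is the coefficient vector of a polynomial
   (X - r_1)...(X - r_m)(X^2 + bX + c), where the r_i are its simple real roots
   and b^2 < 4c; conversely every such polynomial with the sign pattern lies in A.
   Keeping the r_i fixed, the polynomial is affine in (b, c), the condition
   b^2 < 4c is convex and so is the sign pattern, so a straight segment joins the
   point to a normal form (X - x1)(X - x2)(X^k + W) with x1, x2 > 0 and W > 0,
   where k = 2 for d = 4 and k = 3 for d = 5 (then the negative root is -W^(1/3)).
   Both normal forms have the sign pattern sigma_bullet, and they are affine in
   each of x1, x2, W separately, so moving one parameter at a time reaches
   (X - 1)(X - 2)(X^k + 1). *)

Section linked.
Context {R : realType} {V : normedModType R}.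

Definition linked (A : set V) (x y : V) :=
  exists C : set V, [/\ C `<=` A, connected C, C x & C y].

Lemma linked_segment (A : set V) a b :
  (forall t : R, 0 <= t <= 1 -> A (a + t *: (b - a))) -> linked A a b.
Proof.
move=> Aab; exists [set a + t *: (b - a) | t in `[0, 1]]; split.
- by move=> _ [t /= t01 <-]; apply: Aab; rewrite in_itv /= in t01.
- apply: connected_continuous_connected; first exact: segment_connected.
  apply: continuous_subspaceT => t.
  apply: (@continuousD _ _ _ (fun=> a) (fun t : R => t *: (b - a))).
    exact: cst_continuous.
  exact: continuousZr_tmp.
- by exists 0; rewrite /= ?in_itv /= ?ler01 ?lexx // scale0r addr0.
- by exists 1; rewrite /= ?in_itv /= ?ler01 ?lexx // scale1r addrC subrK.
Qed.

Lemma linked_trans {A : set V} y x z : linked A x y -> linked A y z -> linked A x z.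
Proof.
move=> [C [CA cC Cx Cy]] [D [DA cD Dy Dz]]; exists (C `|` D); split.
- by move=> p [/CA|/DA].
- by apply: connectedU => //; exists y.
- by left.
- by right.
Qed.

Lemma connected_linked {A : set V} x0 :
  A x0 -> (forall a, A a -> linked A a x0) -> connected A.
Proof.
move=> Ax0 Alinked.
have -> : A = \bigcup_(C in [set C : set V | [/\ C `<=` A, connected C & C x0]]) C.
  apply/seteqP; split.
  - by move=> a /Alinked [C [CA cC Ca Cx0]]; exists C.
  - by move=> a [C [CA _ _] /CA].
by apply: bigcup_connected => [|C []]; first by exists x0 => C [].
Qed.

End linked.

Section segment_bounds.
Context {R : realFieldType}.
Implicit Types x y z t : R.

Lemma segment_lt x y z t : x < z -> y < z -> 0 <= t <= 1 -> x + t * (y - x) < z.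
Proof.
move=> xz yz /andP[t0 t1]; have [->|t_neq1] := eqVneq t 1; first by rewrite mul1r addrC subrK.
have : 0 < 1 - t by rewrite subr_gt0 lt_neqAle t_neq1.
nra.
Qed.

Lemma segment_gt x y z t : z < x -> z < y -> 0 <= t <= 1 -> z < x + t * (y - x).
Proof.
move=> zx zy t01; rewrite -ltrN2.
have -> : - (x + t * (y - x)) = - x + t * (- y - - x) by ring.
by apply: segment_lt; rewrite ?ltrN2.
Qed.

End segment_bounds.

Section coefficient_vector.
Context {R : realType}.
Implicit Types (d : nat) (p q : {poly R}).

Definition coefv d p : 'rV[R]_d := \row_(i < d) p`_(rev_ord i).

Lemma coefj_coefv d p (j : 'I_d) : coefj (coefv d p) j = p`_j.
Proof. by rewrite /coefj mxE rev_ordK. Qed.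

Lemma coef_Qpoly d (a : 'rV[R]_d) i :
  (Qpoly a)`_i = if insub i is Some j then coefj a j else (i == d)%:R.
Proof.
rewrite /Qpoly coefD coefXn coef_sum.
under eq_bigr => j _ do rewrite coefCM coefXn.
case: insubP => [j id ij|].
  rewrite (bigD1 j) //= -ij eqxx mulr1 big1 ?(ltn_eqF (ltn_ord j)) ?add0r ?addr0 //.
  by move=> k kj; rewrite (inj_eq val_inj) eq_sym (negbTE kj) mulr0.
rewrite -leqNgt => di; rewrite big1 ?addr0 // => j _.
by rewrite gtn_eqF ?mulr0 // (leq_trans _ di).
Qed.

Lemma coefv_Qpoly d (a : 'rV[R]_d) : coefv d (Qpoly a) = a.
Proof.
by apply/rowP => i; rewrite mxE coef_Qpoly valK /coefj rev_ordK.
Qed.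

Lemma Qpoly_coefv d p : p \is monic -> size p = d.+1 -> Qpoly (coefv d p) = p.
Proof.
move=> mon szp; apply/polyP => i; rewrite coef_Qpoly.
case: insubP => [j _ <-|]; first by rewrite coefj_coefv.
rewrite -leqNgt; case: eqVneq => [-> _|ndi di].
  by move/monicP: mon; rewrite lead_coefE szp.
by rewrite nth_default // szp ltn_neqAle eq_sym ndi.
Qed.

Lemma coefv_affine d p q t :
  coefv d (p + t *: (q - p)) = coefv d p + t *: (coefv d q - coefv d p).
Proof. by apply/rowP => i; rewrite !mxE coefD coefZ coefB. Qed.

End coefficient_vector.

Section Qpoly_facts.
Context {R : realType} {d : nat}.
Implicit Types a b : 'rV[R]_d.

Lemma Qpoly_monic a : Qpoly a \is monic /\ size (Qpoly a) = d.+1.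
Proof.
have lt_sum : (size (\sum_(j < d) (coefj a j)%:P * 'X^j)%R < size ('X^d : {poly R}))%N.
  rewrite size_polyXn ltnS; apply/leq_sizeP => i di; rewrite coef_sum big1 // => j _.
  by rewrite coefCM coefXn gtn_eqF ?mulr0 // (leq_trans _ di).
by rewrite /Qpoly monicE lead_coefDl // lead_coefXn size_polyDl // size_polyXn.
Qed.

Lemma has_sign_segment a b t : has_sign_sigma_bullet a -> has_sign_sigma_bullet b ->
  0 <= t <= 1 -> has_sign_sigma_bullet (a + t *: (b - a)).
Proof.
move=> sa sb t01 j; move: (sa j) (sb j); rewrite /coefj !mxE.
by case: sigma_neg => ha hb; [apply: segment_lt | apply: segment_gt].
Qed.

Lemma has_sign_root0 a : has_sign_sigma_bullet a -> (1 < d)%N -> ~~ root (Qpoly a) 0.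
Proof.
move=> sa d1; have d0 : (0 < d)%N by apply: ltnW.
rewrite /root horner_coef0 -[0%N]/(nat_of_ord (Ordinal d0)) coef_Qpoly valK.
have pos0 : sigma_neg d 0 = false by rewrite /sigma_neg orbF; case: (d) d1 => [|[|]].
by move: (sa (Ordinal d0)); rewrite /= pos0 => /gt_eqF ->.
Qed.

End Qpoly_facts.

Lemma horner_deriv_XsubC_mul (K : comNzRingType) (x : K) (q : {poly K}) :
  (('X - x%:P) * q)^`().[x] = q.[x].
Proof. by rewrite derivM derivXsubC !hornerE subrr; ring. Qed.

Section real_roots_times_quadratic.
Context {R : realType}.
Implicit Types (b c x t : R) (rs : seq R).

Definition qpoly b c : {poly R} := 'X^2 + b%:P * 'X + c%:P.

Definition Qfact rs b c : {poly R} := (\prod_(r <- rs) ('X - r%:P)) * qpoly b c.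

Lemma horner_qpoly b c x : (qpoly b c).[x] = x ^+ 2 + b * x + c.
Proof. by rewrite /qpoly !hornerD hornerXn hornerCM hornerX hornerC. Qed.

Lemma qpoly_gt0 {b c} x : b ^+ 2 < 4%:R * c -> 0 < (qpoly b c).[x].
Proof.
move=> disc; rewrite horner_qpoly.
have : 0 <= (2%:R * x + b) ^+ 2 by apply: sqr_ge0.
nra.
Qed.

Lemma monic_qpoly b c : qpoly b c \is monic /\ size (qpoly b c) = 3%N.
Proof.
have lt_lin : (size (b%:P * 'X + c%:P)%R < size ('X^2 : {poly R}))%N.
  by rewrite size_polyXn size_MXaddC; case: ifP; rewrite // !ltnS size_polyC leq_b1.
rewrite /qpoly -addrA monicE lead_coefDl // lead_coefXn size_polyDl // size_polyXn.
by split.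
Qed.

Lemma monic_Qfact rs b c : Qfact rs b c \is monic /\ size (Qfact rs b c) = (size rs).+3.
Proof.
have [mq sq] := monic_qpoly b c.
have mD : \prod_(r <- rs) ('X - r%:P) \is monic by apply: monic_prod_XsubC.
rewrite /Qfact monicMl // mq size_Mmonic ?monic_neq0 // size_prod_XsubC sq addnC.
by split.
Qed.

Lemma root_Qfact rs b c x : b ^+ 2 < 4%:R * c -> root (Qfact rs b c) x = (x \in rs).
Proof.
move=> disc; rewrite /Qfact rootM root_prod_XsubC /root.
by rewrite gt_eqF ?orbF // qpoly_gt0.
Qed.

Lemma Qfact_simple_roots rs b c x : b ^+ 2 < 4%:R * c -> uniq rs ->
  root (Qfact rs b c) x -> ~~ root (Qfact rs b c)^`() x.
Proof.
move=> disc urs; rewrite root_Qfact // => xrs.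
rewrite /Qfact (big_rem _ xrs) /= -mulrA /root horner_deriv_XsubC_mul hornerM.
rewrite mulf_neq0 ?(gt_eqF (qpoly_gt0 x disc)) // horner_prod prodf_seq_neq0.
apply/allP => y yrs /=; rewrite hornerXsubC subr_eq0.
by apply: contraTneq yrs => <-; rewrite mem_rem_uniqF.
Qed.

Lemma nroots_Qfact rs b c (P : R -> bool) : b ^+ 2 < 4%:R * c -> uniq rs ->
  nroots_in (Qfact rs b c) P (count P rs).
Proof.
move=> disc urs; exists [seq x <- rs | P x]; split.
- exact: filter_uniq.
- by rewrite size_filter.
- by move=> x; rewrite mem_filter root_Qfact.
Qed.

Lemma Qfact_segment rs b c b' c' t :
  Qfact rs b c + t *: (Qfact rs b' c' - Qfact rs b c) =
  Qfact rs (b + t * (b' - b)) (c + t * (c' - c)).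
Proof.
rewrite /Qfact /qpoly -!mul_polyC !polyCD !polyCM !polyCB.
set D := \prod_(_ <- _) _; ring.
Qed.

Lemma disc_segment b c b' c' t : b ^+ 2 < 4%:R * c -> b' ^+ 2 < 4%:R * c' -> 0 <= t <= 1 ->
  (b + t * (b' - b)) ^+ 2 < 4%:R * (c + t * (c' - c)).
Proof.
move=> disc disc' t01; have /andP[t0 t1] := t01.
have := segment_gt (4%:R * c - b ^+ 2) (4%:R * c' - b' ^+ 2) 0 t.
rewrite !subr_gt0 => /(_ disc disc' t01) pos.
have -> : (b + t * (b' - b)) ^+ 2 =
  (1 - t) * b ^+ 2 + t * b' ^+ 2 - t * (1 - t) * (b - b') ^+ 2 by ring.
have : 0 <= t * (1 - t) * (b - b') ^+ 2 by rewrite mulr_ge0 ?sqr_ge0 // mulr_ge0 // subr_ge0.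
nra.
Qed.

Lemma Qfact_of_simple_roots (Q : {poly R}) rs :
  Q \is monic -> size Q = (size rs).+3 -> uniq rs ->
  (forall x, root Q x = (x \in rs)) -> (forall x, root Q x -> ~~ root Q^`() x) ->
  exists b c, b ^+ 2 < 4%:R * c /\ Q = Qfact rs b c.
Proof.
move=> mQ szQ urs rootQ simpleQ.
have [q Qe] : exists q, Q = q * \prod_(r <- rs) ('X - r%:P).
  apply: uniq_roots_prod_XsubC; last by rewrite uniq_rootsE.
  by apply/allP => x; rewrite rootQ.
set D := \prod_(_ <- _) _ in Qe.
have mD : D \is monic by apply: monic_prod_XsubC.
have q0 : q != 0.
  by apply: contraTneq mQ => q0; rewrite Qe q0 mul0r monicE lead_coef0 eq_sym oner_eq0.
have sq : size q = 3%N.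
  by move: szQ; rewrite Qe size_Mmonic // size_prod_XsubC /= => /eqP;
     rewrite -addn3 addnC eqn_add2l => /eqP.
have lq : lead_coef q = 1 by move: mQ; rewrite Qe monicE lead_coef_Mmonic // => /eqP.
have qE : q = qpoly q`_1 q`_0.
  apply/polyP => i; rewrite /qpoly !coefD coefXn coefCM coefX coefC.
  move: lq; rewrite lead_coefE sq => lq.
  by case: i => [|[|[|i]]] /=; rewrite ?mulr0 ?mulr1 ?add0r ?addr0 // nth_default ?sq.
exists q`_1, q`_0; split; last by rewrite Qe {1}qE /Qfact mulrC.
(* otherwise q has a real root, which would be a double root of Q *)
rewrite ltNge; apply/negP => disc.
set b := q`_1 in qE disc *; set c := q`_0 in qE disc *.
pose r := (- b + Num.sqrt (b ^+ 2 - 4%:R * c)) / 2%:R.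
have qr : q.[r] = 0.
  have : Num.sqrt (b ^+ 2 - 4%:R * c) ^+ 2 = b ^+ 2 - 4%:R * c by rewrite sqr_sqrtr ?subr_ge0.
  rewrite qE horner_qpoly /r; set s := Num.sqrt _ => s2.
  transitivity ((s ^+ 2 - (b ^+ 2 - 4%:R * c)) / 4%:R); first by field.
  by rewrite s2 subrr mul0r.
have rootQr : root Q r by rewrite /root Qe hornerM qr mul0r.
have Dr : D.[r] = 0 by apply/eqP; rewrite -/(root D r) root_prod_XsubC -rootQ.
by move: (simpleQ r rootQr); rewrite /root Qe derivM !hornerE qr Dr !mulr0 mul0r addr0 eqxx.
Qed.

End real_roots_times_quadratic.

Section nonreal_pair.
Context {R : realType}.
Local Open Scope complex_scope.

Lemma map_Qfact rs {b c : R} {z : R[i]} : z + z^* = - b%:C -> z * z^* = c%:C ->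
  map_poly (@to_C R) (Qfact rs b c) =
  (\prod_(r <- rs) ('X - (r%:C)%:P)) * (('X - z%:P) * ('X - (z^*)%:P)).
Proof.
move=> zsum zprod; rewrite (eq_map_poly (_ : @to_C R =1 real_complex R)) //.
rewrite /Qfact rmorphM /= map_prod_XsubC; congr (_ * _).
rewrite /qpoly !rmorphD !rmorphM /= map_polyX !map_polyC /=.
have -> : b%:C = - (z + z^*) by rewrite zsum opprK.
by rewrite -zprod polyCN polyCD polyCM; ring.
Qed.

Lemma one_nonreal_pair_Qfact rs (b c : R) : b ^+ 2 < 4%:R * c -> one_nonreal_pair (Qfact rs b c).
Proof.
move=> disc.
pose y := Num.sqrt (4%:R * c - b ^+ 2) / 2%:R.
have y_gt0 : 0 < y by rewrite divr_gt0 // sqrtr_gt0 subr_gt0.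
have y2 : y ^+ 2 = c - b ^+ 2 / 4%:R.
  by rewrite /y expr_div_n sqr_sqrtr ?subr_ge0 ?ltW //; field.
pose z : R[i] := (- b / 2%:R) +i* y.
have zsum : z + z^* = - b%:C.
  by rewrite /z; simpc; apply/eqP; rewrite eq_complex /= eqxx andbT; apply/eqP; field.
have zprod : z * z^* = c%:C.
  rewrite /z; simpc; apply/eqP; rewrite eq_complex /=; apply/andP; split; apply/eqP.
    by rewrite -[y * y]expr2 y2; field.
  by rewrite mulrC subrr.
have Imz : complex.Im z != 0 by rewrite /= gt_eqF.
have real_neq_z (r : R) : r%:C - z != 0.
  by apply: contraNneq Imz => /(congr1 (@complex.Im R)) /=; rewrite sub0r => /eqP; rewrite oppr_eq0.
rewrite /one_nonreal_pair (map_Qfact rs zsum zprod); exists z; split => //.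
- by rewrite !rootM root_XsubC eqxx orbT.
- rewrite mulrCA /root horner_deriv_XsubC_mul hornerM hornerXsubC mulf_neq0 //.
    rewrite horner_prod prodf_seq_neq0; apply/allP => r _ /=.
    by rewrite hornerXsubC -oppr_eq0 opprB real_neq_z.
  rewrite subr_eq0; apply: contra Imz => /eqP/(congr1 (@complex.Im R)) /= zIm.
  by apply/eqP; lra.
- move=> w Imw; rewrite rootM -(big_map (real_complex R) xpredT (fun a => 'X - a%:P)).
  rewrite root_prod_XsubC => /orP[/mapP[r _ wr]|].
    by move: Imw; rewrite wr /= eqxx.
  by rewrite rootM !root_XsubC => /orP[/eqP->|/eqP->]; [left|right].
Qed.

End nonreal_pair.

Section A_sigma_Qfact.
Context {R : realType}.
Implicit Types (b c : R) (sp sn : seq R).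

Definition signed_roots sp sn :=
  [/\ uniq sp, all (fun x => 0 < x) sp, uniq sn & all (fun x => x < 0) sn].

Lemma uniq_signed_roots {sp sn} : signed_roots sp sn -> uniq (sp ++ sn).
Proof.
case=> usp /allP psp usn /allP nsn; rewrite cat_uniq usp usn andbT.
apply/hasPn => x /nsn x_lt0; apply/negP => /psp x_gt0.
by move: (lt_trans x_lt0 x_gt0); rewrite ltxx.
Qed.

Lemma count_signed_roots {sp sn} : signed_roots sp sn ->
  count (fun x => 0 < x) (sp ++ sn) = size sp /\ count (fun x => x < 0) (sp ++ sn) = size sn.
Proof.
case=> _ /allP psp _ /allP nsn; rewrite !count_cat.
have p_sp : {in sp, (fun x => 0 < x) =1 predT} by move=> x /psp.
have p_sn : {in sn, (fun x => 0 < x) =1 pred0} by move=> x /nsn /= /ltW; rewrite leNgt => /negbTE.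
have n_sp : {in sp, (fun x => x < 0) =1 pred0} by move=> x /psp /= /ltW; rewrite leNgt => /negbTE.
have n_sn : {in sn, (fun x => x < 0) =1 predT} by move=> x /nsn.
rewrite (eq_in_count p_sp) (eq_in_count p_sn) (eq_in_count n_sp) (eq_in_count n_sn).
by rewrite !count_predT !count_pred0 addn0 add0n.
Qed.

Lemma A_sigma_Qfact d sp sn b c : signed_roots sp sn -> (size sp + size sn).+2 = d ->
  b ^+ 2 < 4%:R * c -> has_sign_sigma_bullet (coefv d (Qfact (sp ++ sn) b c)) ->
  A_sigma (size sp) (size sn) (coefv d (Qfact (sp ++ sn) b c)).
Proof.
move=> sr szd disc sgn; have urs := uniq_signed_roots sr.
have [mQ szQ] := monic_Qfact (sp ++ sn) b c.
have QE : Qpoly (coefv d (Qfact (sp ++ sn) b c)) = Qfact (sp ++ sn) b c.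
  by rewrite Qpoly_coefv // szQ size_cat szd.
have [<- <-] := count_signed_roots sr.
split; rewrite // QE.
- exact: nroots_Qfact.
- exact: nroots_Qfact.
- by move=> x; apply: Qfact_simple_roots.
- exact: one_nonreal_pair_Qfact.
Qed.

Lemma A_sigma_Qfact_inv {d pos neg} {a : 'rV[R]_d} :
  A_sigma pos neg a -> (pos + neg).+2 = d -> exists sp sn b c,
  [/\ a = coefv d (Qfact (sp ++ sn) b c), b ^+ 2 < 4%:R * c, signed_roots sp sn,
      size sp = pos & size sn = neg].
Proof.
move=> [sgn [sp [usp szp memp]] [sn [usn szn memn]] simple _] szd.
have [mQ szQ] := Qpoly_monic a.
have Q0 : ~~ root (Qpoly a) 0 by apply: has_sign_root0; rewrite // -szd.
have rootQ x : root (Qpoly a) x = (x \in sp ++ sn).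
  rewrite mem_cat memp memn; case: ltgtP => [x_lt0|x_gt0|<-]; rewrite ?andbF ?orbF //.
  exact/negbTE.
have sr : signed_roots sp sn.
  by split=> //; apply/allP => x; rewrite ?memp ?memn => /andP[].
have [b [c [disc QE]]] : exists b c, b ^+ 2 < 4%:R * c /\ Qpoly a = Qfact (sp ++ sn) b c.
  apply: Qfact_of_simple_roots => //; last exact: uniq_signed_roots.
  by rewrite szQ size_cat szp szn -szd.
by exists sp, sn, b, c; split; rewrite // -QE coefv_Qpoly.
Qed.

Lemma linked_Qfact d sp sn b c b' c' : signed_roots sp sn -> (size sp + size sn).+2 = d ->
  b ^+ 2 < 4%:R * c -> b' ^+ 2 < 4%:R * c' ->
  has_sign_sigma_bullet (coefv d (Qfact (sp ++ sn) b c)) ->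
  has_sign_sigma_bullet (coefv d (Qfact (sp ++ sn) b' c')) ->
  linked (A_sigma (size sp) (size sn))
    (coefv d (Qfact (sp ++ sn) b c)) (coefv d (Qfact (sp ++ sn) b' c')).
Proof.
move=> sr szd disc disc' sgn sgn'; apply: linked_segment => t t01.
have sgn_t := has_sign_segment _ _ _ sgn sgn' t01.
rewrite -coefv_affine Qfact_segment in sgn_t *.
by apply: A_sigma_Qfact => //; apply: disc_segment.
Qed.

End A_sigma_Qfact.

Section normal_form.
Context {R : realType}.
Implicit Types (x y W t : R).

Definition normal_poly k x1 x2 W : {poly R} := ('X - x1%:P) * ('X - x2%:P) * ('X^k + W%:P).

Lemma normal_polyC k x1 x2 W : normal_poly k x1 x2 W = normal_poly k x2 x1 W.
Proof. by rewrite /normal_poly [_ * ('X - x2%:P)]mulrC. Qed.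

Lemma normal_poly_segment_root k x y x2 W t :
  normal_poly k (x + t * (y - x)) x2 W =
  normal_poly k x x2 W + t *: (normal_poly k y x2 W - normal_poly k x x2 W).
Proof. by rewrite /normal_poly -!mul_polyC !polyCD !polyCM !polyCB; ring. Qed.

Lemma normal_poly_segment_const k x1 x2 W W' t :
  normal_poly k x1 x2 (W + t * (W' - W)) =
  normal_poly k x1 x2 W + t *: (normal_poly k x1 x2 W' - normal_poly k x1 x2 W).
Proof. by rewrite /normal_poly -!mul_polyC !polyCD !polyCM !polyCB; ring. Qed.

Lemma coef_normal_poly k x1 x2 W j : (normal_poly k x1 x2 W)`_j =
  (j == k.+2)%:R - (x1 + x2) * (j == k.+1)%:R + x1 * x2 * (j == k)%:R
  + W * (j == 2)%:R - (x1 + x2) * W * (j == 1)%:R + x1 * x2 * W * (j == 0)%:R.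
Proof.
have -> : normal_poly k x1 x2 W = 'X^(k.+2) - (x1 + x2) *: 'X^(k.+1) + (x1 * x2) *: 'X^k
    + W *: 'X^2 - ((x1 + x2) * W) *: 'X^1 + (x1 * x2 * W) *: 'X^0.
  by rewrite /normal_poly -!mul_polyC !exprS expr0 !polyCM polyCD; ring.
by rewrite !(coefD, coefN, coefZ, coefXn).
Qed.

(* For k >= 4 the coefficients of x^3, ..., x^(k-1) vanish. *)
Lemma has_sign_normal_poly {k x1 x2 W} : (k == 2) || (k == 3) -> 0 < x1 -> 0 < x2 -> 0 < W ->
  has_sign_sigma_bullet (coefv k.+2 (normal_poly k x1 x2 W)).
Proof.
move=> k23 x1_gt0 x2_gt0 W_gt0.
have sP : 0 < x1 * x2 by rewrite mulr_gt0.
have sW : 0 < (x1 + x2) * W by rewrite mulr_gt0 ?addr_gt0.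
case/orP: k23 => /eqP -> j; rewrite coefj_coefv coef_normal_poly;
  case: j => [[|[|[|[|[|]]]]] //= _];
  rewrite /sigma_neg /= ?mulr0 ?mulr1 ?addr0 ?add0r ?subr0 ?sub0r ?oppr_lt0 //; nra.
Qed.

End normal_form.

Section normal_form_paths.
Context {R : realType} {d : nat} (k : nat) (A : set 'rV[R]_d).
Hypothesis A_normal : forall x1 x2 W : R, 0 < x1 -> 0 < x2 -> x1 != x2 -> 0 < W ->
  A (coefv d (normal_poly k x1 x2 W)).

Lemma linked_normal_const x1 x2 W W' : 0 < x1 -> 0 < x2 -> x1 != x2 -> 0 < W -> 0 < W' ->
  linked A (coefv d (normal_poly k x1 x2 W)) (coefv d (normal_poly k x1 x2 W')).
Proof.
move=> x1_gt0 x2_gt0 x12 W_gt0 W'_gt0; apply: linked_segment => t t01.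
by rewrite -coefv_affine -normal_poly_segment_const; apply: A_normal => //; apply: segment_gt.
Qed.

Lemma linked_normal_root x y x2 W : 0 < x -> 0 < y -> 0 < x2 -> 0 < W ->
  (x < x2) && (y < x2) || (x2 < x) && (x2 < y) ->
  linked A (coefv d (normal_poly k x x2 W)) (coefv d (normal_poly k y x2 W)).
Proof.
move=> x_gt0 y_gt0 x2_gt0 W_gt0 side; apply: linked_segment => t t01.
rewrite -coefv_affine -normal_poly_segment_root; apply: A_normal => //.
  exact: segment_gt.
by case/orP: side => /andP[hx hy]; [rewrite lt_eqF|rewrite gt_eqF];
  rewrite ?segment_lt ?segment_gt.
Qed.

Lemma linked_normal x1 x2 W : 0 < x1 -> 0 < x2 -> x1 != x2 -> 0 < W ->
  linked A (coefv d (normal_poly k x1 x2 W)) (coefv d (normal_poly k 1 2%:R 1)).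
Proof.
wlog x12 : x1 x2 / x1 < x2.
  move=> lt_case x1_gt0 x2_gt0; case: (ltgtP x1 x2) => [lt12 _|lt21 _|//] W_gt0.
    by apply: lt_case; rewrite // lt_eqF.
  by rewrite normal_polyC; apply: lt_case; rewrite // lt_eqF.
move=> x1_gt0 x2_gt0 _ W_gt0; set M := Num.max x2 2%:R.
have x1M : x1 < M by apply: (lt_le_trans x12); rewrite le_max lexx.
have M_gt1 : 1 < M by apply: (@lt_le_trans _ _ 2%:R); rewrite ?ltr1n // le_max lexx orbT.
have M_gt0 : 0 < M := lt_trans ltr01 M_gt1.
apply: (linked_trans (coefv d (normal_poly k x1 x2 1))).
  by apply: linked_normal_const; rewrite ?lt_eqF.
apply: (linked_trans (coefv d (normal_poly k x1 M 1))).
  rewrite ![normal_poly k x1 _ 1]normal_polyC.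
  by apply: linked_normal_root; rewrite // x12 x1M orbT.
apply: (linked_trans (coefv d (normal_poly k 1 M 1))).
  by apply: linked_normal_root; rewrite // x1M M_gt1.
rewrite ![normal_poly k 1 _ 1]normal_polyC.
by apply: linked_normal_root; rewrite // M_gt1 ltr1n orbT.
Qed.

End normal_form_paths.

Section degrees_4_and_5.
Context {R : realType}.

Lemma normal_poly2_Qfact (x1 x2 W : R) :
  normal_poly 2 x1 x2 W = Qfact ([:: x1; x2] ++ [::]) 0 W.
Proof. by rewrite /normal_poly /Qfact /qpoly !big_cons big_nil polyC0; ring. Qed.

Lemma normal_poly3_Qfact (x1 x2 w : R) :
  normal_poly 3 x1 x2 (w ^+ 3) = Qfact ([:: x1; x2] ++ [:: - w]) (- w) (w ^+ 2).
Proof. by rewrite /normal_poly /Qfact /qpoly !big_cons big_nil !polyCN polyCM !rmorphXn /=; ring. Qed.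

Lemma A_sigma_normal_poly2 (x1 x2 W : R) : 0 < x1 -> 0 < x2 -> x1 != x2 -> 0 < W ->
  A_sigma 2 0 (coefv 4 (normal_poly 2 x1 x2 W)).
Proof.
move=> x1_gt0 x2_gt0 x12 W_gt0.
have := has_sign_normal_poly (k := 2%N) isT x1_gt0 x2_gt0 W_gt0.
rewrite normal_poly2_Qfact => sgn; apply: A_sigma_Qfact => //.
- by split; rewrite /= ?inE ?x12 ?x1_gt0 ?x2_gt0.
- by rewrite expr0n mulr_gt0.
Qed.

Lemma cube_powR {W : R} : 0 <= W -> (W `^ 3%:R^-1) ^+ 3 = W.
Proof.
by move=> W_ge0; rewrite -powR_mulrn ?powR_ge0 // -powRrM mulVf ?pnatr_eq0 // powRr1.
Qed.

Lemma A_sigma_normal_poly3 (x1 x2 W : R) : 0 < x1 -> 0 < x2 -> x1 != x2 -> 0 < W ->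
  A_sigma 2 1 (coefv 5 (normal_poly 3 x1 x2 W)).
Proof.
move=> x1_gt0 x2_gt0 x12 W_gt0.
have := has_sign_normal_poly (k := 3%N) isT x1_gt0 x2_gt0 W_gt0.
have w_gt0 : 0 < W `^ 3%:R^-1 by apply: powR_gt0.
rewrite -(cube_powR (ltW W_gt0)) normal_poly3_Qfact => sgn; apply: A_sigma_Qfact => //.
- by split; rewrite /= ?inE ?x12 ?x1_gt0 ?x2_gt0 ?oppr_lt0 ?w_gt0.
- by rewrite sqrrN; nra.
Qed.

Lemma connected_A_sigma4 : connected (@A_sigma R 4 2 0).
Proof.
have base : A_sigma 2 0 (coefv 4 (normal_poly 2 (1 : R) 2%:R 1)).
  by apply: A_sigma_normal_poly2; rewrite ?ltr01 ?ltr0n // lt_eqF ?ltr1n.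
apply: (connected_linked _ base) => a Aa; have [sgn _ _ _ _] := Aa.
have [sp [sn [b [c [aE disc sr szp szn]]]]] := A_sigma_Qfact_inv Aa erefl.
case: sp sr szp aE => [|x1 [|x2 []]] // sr _; case: sn sr szn => // sr _ aE.
have [/andP[]] := sr; rewrite inE => x12 _ /and3P[x1_gt0 x2_gt0 _] _ _.
apply: (linked_trans (coefv 4 (normal_poly 2 x1 x2 1))); last first.
  exact: (linked_normal _ _ A_sigma_normal_poly2 _ _ _ x1_gt0 x2_gt0 x12 ltr01).
rewrite aE normal_poly2_Qfact; apply: (linked_Qfact 4 [:: x1; x2] [::]); rewrite -?aE //.
- by rewrite expr0n mulr_gt0.
- by rewrite -normal_poly2_Qfact; apply: has_sign_normal_poly.
Qed.

Lemma connected_A_sigma5 : connected (@A_sigma R 5 2 1).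
Proof.
have base : A_sigma 2 1 (coefv 5 (normal_poly 3 (1 : R) 2%:R 1)).
  by apply: A_sigma_normal_poly3; rewrite ?ltr01 ?ltr0n // lt_eqF ?ltr1n.
apply: (connected_linked _ base) => a Aa; have [sgn _ _ _ _] := Aa.
have [sp [sn [b [c [aE disc sr szp szn]]]]] := A_sigma_Qfact_inv Aa erefl.
case: sp sr szp aE => [|x1 [|x2 []]] // sr _; case: sn sr szn => [|x3 []] // sr _ aE.
have [/andP[]] := sr; rewrite inE => x12 _ /and3P[x1_gt0 x2_gt0 _] _ /andP[x3_lt0 _].
have W_gt0 : 0 < (- x3) ^+ 3 by rewrite exprn_gt0 ?oppr_gt0.
apply: (linked_trans (coefv 5 (normal_poly 3 x1 x2 ((- x3) ^+ 3)))); last first.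
  exact: (linked_normal _ _ A_sigma_normal_poly3 _ _ _ x1_gt0 x2_gt0 x12 W_gt0).
rewrite aE normal_poly3_Qfact opprK; apply: (linked_Qfact 5 [:: x1; x2] [:: x3]); rewrite -?aE //.
- by rewrite sqrrN; nra.
- by have := has_sign_normal_poly (k := 3%N) isT x1_gt0 x2_gt0 W_gt0; rewrite normal_poly3_Qfact opprK.
Qed.

End degrees_4_and_5.

Theorem theorem1 (R : realType) :
  connected (@A_sigma R 4 2 0 : set 'rV[R]_4) /\ connected (@A_sigma R 5 2 1 : set 'rV[R]_5).
Proof. by split; [apply: connected_A_sigma4 | apply: connected_A_sigma5]. Qed.
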